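(* Let $\xi:\mathbb{R}^{D\times D}\to\mathbb{R}$ be smooth and strictly convex on $S^D_+$, and let $\varphi:\mathcal P^\uparrow_\xi\to\mathbb{R}$ be continuous. Then for every $\chi_0\in\mathcal L_{\le1}(\mathcal K_\xi)$, $\bar\varphi_*(\chi_0)=\varphi^\xi_*(\chi_0)$.
   Context: $S^D_+$: positive semidefinite symmetric $D\times D$ matrices with Frobenius norm $|\cdot|$; $B(0,1)$: closed unit ball of $S^D$; $\nabla\xi$: Frobenius gradient; $\mathcal K_\xi=\nabla\xi(B(0,1)\cap S^D_+)$, $x_0=\nabla\xi(0)$. $\mathcal P^\uparrow_\xi=\{\mathrm{Law}(\nabla\xi(\mathsf q(U)))\}$, $U$ uniform on $[0,1)$, $\mathsf q:[0,1)\to S^D_+$ right-continuous nondecreasing ($\mathsf q(v)-\mathsf q(u)\in S^D_+$ for $u\le v$) with $|\mathsf q|\le1$. $\mathcal L_{\le1}(\mathcal K_\xi)$: Lipschitz $\chi:\mathcal K_\xi\to\mathbb{R}$ with $\max\{|\chi(x_0)|,|\chi|_{\mathrm{Lip}}\}\le1$. $|\nu|_{\mathcal M}=\sup_{\chi\in\mathcal L_{\le1}(\mathcal K_\xi)}\int\chi\,\mathrm d\nu$ for signed Borel measures, $\mathcal M_1(\mathcal K_\xi)$ the completion, $d(\nu,\nu')=|\nu-\nu'|_{\mathcal M}$. $\mathrm{Bar}(\eta)(A)=\int\nu(A)\,\mathrm d\eta(\nu)$ for Borel probability measures $\eta$ on $(\mathcal P^\uparrow_\xi,d)$. Definitions: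 $\bar\varphi(\mu')=\sup_\eta\{\int\varphi\,\mathrm d\eta-d(\mathrm{Bar}(\eta),\mu')\}$ (sup over Borel probability measures on $\mathcal P^\uparrow_\xi$), $\bar\varphi_*(\chi)=\inf_{\mu\in\mathcal M_1(\mathcal K_\xi)}\{\int\chi\,\mathrm d\mu-\bar\varphi(\mu)\}$, $\varphi^\xi_*(\chi)=\inf_{\mu\in\mathcal P^\uparrow_\xi}\{\int\chi\,\mathrm d\mu-\varphi(\mu)\}$. *)

From HB Require Import structures.
From mathcomp Require Import all_boot all_order all_algebra.
From mathcomp Require Import all_classical all_reals all_analysis.
Unset Implicit Arguments. Unset Strict Implicit. Unset Printing Implicit Defensive.
Import Order.TTheory GRing.Theory Num.Theory.
Import numFieldNormedType.Exports.
Local Open Scope classical_set_scope.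
Local Open Scope ring_scope.

Section Defs.
Context {R : realType} {D : nat}.
Local Notation M := 'M[R]_(D, D).

Definition frob (A : M) : R := Num.sqrt (\sum_i \sum_j (A i j) ^+ 2).

Definition psd (A : M) : Prop :=
  A^T = A /\ forall v : 'cV[R]_D, 0 <= (v^T *m A *m v) 0 0.

Definition loewner_le (A B : M) : Prop := psd (B - A).

Definition iterD (vs : seq M) (f : M -> R) : M -> R :=
  foldr (fun v g => 'D_v g) f vs.

Definition smooth (f : M -> R) : Prop :=
  forall vs : seq M,
    continuous (iterD vs f) /\ forall v x : M, derivable (iterD vs f) x v.

Definition strictly_convex_on_psd (f : M -> R) : Prop :=
  forall A B : M, psd A -> psd B -> A <> B ->
  forall t : R, 0 < t < 1 ->
    f (t *: A + (1 - t) *: B) < t * f A + (1 - t) * f B.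

Definition grad (f : M -> R) (A : M) : M :=
  \matrix_(i, j) ('D_(delta_mx i j) f A).

Definition Kxi (xi : M -> R) : set M :=
  [set grad xi A | A in [set A | psd A /\ frob A <= 1]].
Definition x0 (xi : M -> R) : M := grad xi 0.

(** L_{<=1}(K_xi): max(|chi(x0)|, Lip_K(chi)) <= 1, Lipschitz wrt Frobenius
    norm on K_xi (values of chi outside K_xi are irrelevant). *)
Definition lip1 (xi : M -> R) (chi : M -> R) : Prop :=
  `|chi (x0 xi)| <= 1 /\
  forall x y, Kxi xi x -> Kxi xi y -> `|chi x - chi y| <= frob (x - y).

Definition MT : measurableType _ := @g_sigma_algebraType ('M[R]_(D, D) : pointedType) open.

Definition intK (xi : M -> R) (mu : {measure set MT -> \bar R}) (chi : M -> R) : R :=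
  fine (\int[mu]_(x in (Kxi xi : set MT)) (chi x)%:E).

(** P^up_xi: laws of grad xi (q(U)), U uniform on [0,1), q right-continuous,
    nondecreasing (Loewner), with values in S^D_+ and |q| <= 1. *)
Definition inPup (xi : M -> R) (nu : probability MT R) : Prop :=
  exists q : R -> M,
    (forall u, 0 <= u < 1 -> psd (q u) /\ frob (q u) <= 1) /\
    (forall u v, 0 <= u -> u <= v -> v < 1 -> loewner_le (q u) (q v)) /\
    (forall u, 0 <= u < 1 -> q x @[x --> u^'+] --> q u) /\
    (forall A : set MT, measurable A ->
       nu A = (@lebesgue_measure R)
                ([set u | 0 <= u < 1] `&` (fun u => grad xi (q u)) @^-1` A)).

Definition dist (xi : M -> R) (nu nu' : probability MT R) : \bar R :=
  ereal_sup [set (intK xi nu chi - intK xi nu' chi)%:E | chi in lip1 xi].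

(** Borel sigma-algebra of (P^up_xi, d): generated (on the ambient type of
    probability measures) by the sets whose trace on P^up_xi is d-open in
    P^up_xi.  A probability on it charging P^up_xi with mass 1 is the same as a
    Borel probability on (P^up_xi, d). *)
Definition dopen (xi : M -> R) : set (set (probability MT R)) :=
  [set U : set (probability MT R) | forall nu, U nu -> inPup xi nu ->
     exists2 r : R, 0 < r & forall nu', inPup xi nu' -> (dist xi nu nu' < r%:E)%E -> U nu'].
Definition PT (xi : M -> R) := @g_sigma_algebraType (probability MT R) (dopen xi).

Definition Pup (xi : M -> R) : set (PT xi) := [set nu | inPup xi nu].

Definition borel_prob_Pup (xi : M -> R) (eta : probability (PT xi) R) : Prop :=
  eta (Pup xi) = 1%E.

Definition is_Bar (xi : M -> R) (eta : probability (PT xi) R) (beta : probability MT R) : Prop :=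
  forall A : set MT, measurable A ->
    beta A = (\int[eta]_(nu in Pup xi) ((nu : probability MT R) A))%E.

(** M_1(K_xi): completion of the signed Borel measures on K_xi for |.|_M,
    realised as the closure of the signed measures nu = mu1 - mu2
    (mu1, mu2 finite positive measures, restricted to K_xi) in the dual
    norm sup_{chi in L_{<=1}}; an element is given by its action
    chi |-> int chi d mu on L_{<=1}. *)
Definition inM1 (xi : M -> R) (m : (M -> R) -> R) : Prop :=
  forall e : R, 0 < e ->
    exists mu1 mu2 : {finite_measure set MT -> \bar R},
      forall chi, lip1 xi chi ->
        `|m chi - (intK xi mu1 chi - intK xi mu2 chi)| <= e.

Definition dM (xi : M -> R) (beta : probability MT R) (m : (M -> R) -> R) : \bar R :=
  ereal_sup [set (intK xi beta chi - m chi)%:E | chi in lip1 xi].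

Definition barphi (xi : M -> R) (phi : probability MT R -> R) (m : (M -> R) -> R) : \bar R :=
  ereal_sup [set r : \bar R | exists (eta : probability (PT xi) R)
      (beta : probability MT R),
      [/\ borel_prob_Pup xi eta, is_Bar xi eta beta &
       r = (\int[eta]_(nu in Pup xi) (phi nu)%:E - dM xi beta m)%E]].

Definition barphi_star (xi : M -> R) (phi : probability MT R -> R) (chi : M -> R) : \bar R :=
  ereal_inf [set ((m chi)%:E - barphi xi phi m)%E | m in inM1 xi].

Definition phixi_star (xi : M -> R) (phi : probability MT R -> R) (chi : M -> R) : \bar R :=
  ereal_inf [set (intK xi nu chi - phi nu)%:E | nu in inPup xi].

Definition cont_Pup (xi : M -> R) (phi : probability MT R -> R) : Prop :=
  forall nu, inPup xi nu -> forall e : R, 0 < e ->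
    exists2 delta : R, 0 < delta &
      forall nu', inPup xi nu' -> (dist xi nu nu' < delta%:E)%E ->
        `|phi nu - phi nu'| < e.

End Defs.

From Pilot Require Import Defs.
From HB Require Import structures.
From mathcomp Require Import all_boot all_order all_algebra.
From mathcomp Require Import all_classical all_reals all_analysis.
From mathcomp Require Import measurable_realfun lra.
Import Order.TTheory GRing.Theory Num.Theory.
Import numFieldNormedType.Exports.
Local Open Scope classical_set_scope.
Local Open Scope ring_scope.

(* For [nu] in P^up, the functional [intK nu] lies in M_1 and the Dirac mass at [nu]
   is admissible in the supremum defining [bar phi (intK nu)], at distance 0; hence
   [bar phi_* <= phi^xi_*].  Conversely, if [l = phi^xi_* chi0] then
   [phi nu <= int chi0 d nu - l] on P^up.  Integrating against [eta] and using that
   [int chi0 d Bar(eta)] is the [eta]-average of [int chi0 d nu] gives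
   [int phi d eta <= int chi0 d beta - l], while [int chi0 d beta - mu chi0] is at most
   [d(beta, mu)] since [chi0] is admissible in the supremum defining [d]; so
   [bar phi mu <= mu chi0 - l].
   The averaging identity needs [nu |-> nu A] to be Borel on (P^up, d).  By Dynkin's
   lemma it suffices to take [A] open; then [nu A] is the increasing limit of the
   integrals of [min(1, (n+1) dist(., A^c))], each of which is [n+1] times the
   integral of a function of L_{<=1}, hence [d]-lower semicontinuous in [nu]. *)

Section FrobeniusNorm.
Context {R : realType} {D : nat}.
Local Notation M := 'M[R]_(D, D).

Lemma frob_ge0 (A : M) : 0 <= frob A.
Proof. exact: sqrtr_ge0. Qed.

Lemma frob0 : frob (0 : M) = 0.
Proof.
rewrite /frob big1 ?sqrtr0 // => i _; rewrite big1 // => j _.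
by rewrite mxE expr0n.
Qed.

Lemma normr_entry_le_frob (A : M) i j : `|A i j| <= frob A.
Proof.
have sqr_sum_ge0 (I : finType) (P : pred I) (F : I -> R) :
    0 <= \sum_(k | P k) F k ^+ 2.
  by apply: sumr_ge0 => k _; exact: sqr_ge0.
rewrite /frob -sqrtr_sqr ler_sqrt; last first.
  by apply: sumr_ge0 => k _; exact: sqr_sum_ge0.
rewrite (bigD1 i) //= (bigD1 j) //= -addrA lerDl.
by apply: addr_ge0; [exact: sqr_sum_ge0 | apply: sumr_ge0 => k _; exact: sqr_sum_ge0].
Qed.

Lemma mx_norm_le_frob (A : M) : `|A| <= frob A.
Proof.
rewrite (_ : `|A| = mx_norm A) // mx_normrE; apply: bigmax_le; first exact: frob_ge0.
by move=> [i j] _; exact: normr_entry_le_frob.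
Qed.

Lemma frob_le_mx_norm (A : M) : frob A <= D%:R * `|A|.
Proof.
have entry_le i j : `|A i j| <= `|A|.
  rewrite (_ : `|A| = mx_norm A) // mx_normrE.
  exact: (le_bigmax _ (fun k => `|A k.1 k.2|) (i, j)).
rewrite /frob -[X in _ <= X]ger0_norm ?mulr_ge0 //.
rewrite -sqrtr_sqr ler_sqrt ?sqr_ge0 //.
apply: (@le_trans _ _ (\sum_(i < D) \sum_(j < D) `|A| ^+ 2)).
  apply: ler_sum => i _; apply: ler_sum => j _.
  by rewrite -real_normK ?num_real // lerXn2r ?nnegrE.
rewrite !sumr_const card_ord -mulrnA -mulr_natr exprMn mulrC.
by rewrite mul1r -natrX mulr_natr -mulnn.
Qed.

Lemma continuous_frob : continuous (@frob R D).
Proof.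
move=> A; apply: continuous_comp; last exact: sqrt_continuous.
apply: continuous_big => [|i _ B]; first exact: add_continuous.
apply: continuous_big => [|j _ C]; first exact: add_continuous.
by apply: continuousM; exact: coord_continuous.
Qed.

End FrobeniusNorm.

Lemma continuous_mx {R : realType} {m n : nat} (T : topologicalType)
    (f : T -> 'M[R]_(m, n)) :
  (forall i j, continuous (fun x => f x i j)) -> continuous f.
Proof.
move=> fc x; apply/cvg_ballP => e e0.
have near_entries (ij : 'I_m * 'I_n) :
    \forall y \near x, ball (f x ij.1 ij.2) e (f y ij.1 ij.2).
  by move/cvg_ballP: (fc ij.1 ij.2 x); apply.
apply: filterS (filter_forall (nbhs_filter x) near_entries) => y fy.
by split => // i j; exact: (fy (i, j)).
Qed.

Section PsdBall.
Context {R : realType} {D : nat}.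
Local Notation M := 'M[R]_(D, D).

Lemma psd0 : psd (0 : M).
Proof. by split; [rewrite trmx0 | move=> v; rewrite mulmx0 mul0mx mxE]. Qed.

Lemma continuous_quadratic_form (v : 'cV[R]_D) :
  continuous (fun A : M => (v^T *m A *m v) 0 0).
Proof.
rewrite (_ : (fun A => _) = fun A : M => \sum_j (\sum_k v^T 0 k * A k j) * v j 0).
  apply: continuous_big => [|j _ A]; first exact: add_continuous.
  apply: continuousM; last exact: cst_continuous.
  apply: continuous_big => [|k _ B]; first exact: add_continuous.
  by apply: continuousM; [exact: cst_continuous | exact: coord_continuous].
by apply/funext => A; rewrite !mxE; apply: eq_bigr => j _; rewrite !mxE.
Qed.

Lemma closed_psd_ball : closed [set A : M | psd A /\ frob A <= 1].
Proof.
rewrite (_ : [set A | _] = [set A | A^T = A]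
    `&` \bigcap_(v in [set: 'cV[R]_D])
          (fun A : M => (v^T *m A *m v) 0 0) @^-1` [set r | 0 <= r]
    `&` frob @^-1` [set r | r <= 1]).
  apply: closedI; first apply: closedI.
  - rewrite (_ : [set A | _] = \bigcap_(ij in [set: 'I_D * 'I_D])
        (fun A : M => A ij.1 ij.2 - A ij.2 ij.1) @^-1` [set 0]).
      apply: closed_bigI => ij _; apply: preimage_closed; last exact: closed_eq.
      by move=> A _; apply: continuousB; exact: coord_continuous.
    apply/predeqP => A; split => [AT ij _ /=|AT]; first by rewrite -{1}AT mxE subrr.
    apply/matrixP => i j; rewrite mxE; apply/eqP.
    by rewrite -subr_eq0; apply/eqP; exact: (AT (j, i)).
  - apply: closed_bigI => v _; apply: preimage_closed; last exact: closed_ge.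
    by move=> A _; exact: continuous_quadratic_form.
  - apply: preimage_closed; last exact: closed_le.
    by move=> A _; exact: continuous_frob.
apply/predeqP => A; split => -[[AT Apos] A1]; do 2 split => //.
- by move=> v _; exact: Apos.
- by move=> v; exact: Apos.
Qed.

Lemma compact_psd_ball : compact [set A : M | psd A /\ frob A <= 1].
Proof.
pose cube := [set v : 'rV[R]_(D * D) | forall k, `[-1, 1]%classic (v ord0 k)].
have compact_cube : compact cube.
  by apply: (@rV_compact R (D * D) (fun=> `[-1, 1]%classic)) => _; exact: segment_compact.
have continuous_vec_mx : continuous (@vec_mx R D D).
  apply: continuous_mx => i j.
  have vec_mxE v : vec_mx v i j = v 0 (mxvec_index i j).
    by rewrite -[in RHS](vec_mxK v) mxvecE.
  under eq_fun do rewrite vec_mxE; exact: coord_continuous.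
apply: subclosed_compact closed_psd_ball
  (continuous_compact (continuous_subspaceT continuous_vec_mx) compact_cube) _.
move=> A [_ A1]; exists (mxvec A); last exact: mxvecK.
move=> k; case/mxvec_indexP: k => i j; rewrite /= mxvecE in_itv /= -ler_norml.
exact: le_trans (normr_entry_le_frob A i j) A1.
Qed.

End PsdBall.

Section GradientImage.
Context {R : realType} {D : nat}.
Local Notation M := 'M[R]_(D, D).
Variable xi : M -> R.

Lemma Kxi_x0 : Kxi xi (x0 xi).
Proof. by exists 0 => //; split; [exact: psd0 | rewrite frob0]. Qed.

Lemma lip1_lipschitz chi : lip1 xi chi -> (D%:R).-lipschitz_(Kxi xi) chi.
Proof.
by move=> [_ Lchi] [x y] [/= Kx Ky]; exact: le_trans (Lchi _ _ Kx Ky) (frob_le_mx_norm _).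
Qed.

Hypothesis sxi : smooth xi.

Lemma continuous_grad : continuous (grad xi).
Proof.
apply: continuous_mx => i j.
have -> : (fun A => grad xi A i j) = Defs.iterD [:: delta_mx i j] xi.
  by apply/funext => A; rewrite /grad mxE.
by case: (sxi [:: delta_mx i j]).
Qed.

Lemma compact_Kxi : compact (Kxi xi).
Proof.
apply: continuous_compact compact_psd_ball.
exact: continuous_subspaceT continuous_grad.
Qed.

Lemma closed_Kxi : closed (Kxi xi).
Proof. by apply: compact_closed; [exact: norm_hausdorff | exact: compact_Kxi]. Qed.

Lemma lip1_bounded :
  exists C : R, forall chi, lip1 xi chi -> forall x, Kxi xi x -> `|chi x| <= C.
Proof.
have /compact_bounded [N [_ HN]] := compact_Kxi.
have normK x : Kxi xi x -> `|x| <= `|N| + 1.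
  move=> Kx; apply: (HN (`|N| + 1)) => //.
  by rewrite (le_lt_trans (real_ler_norm _)) ?ltrDl ?num_real.
exists (1 + D%:R * ((`|N| + 1) + (`|N| + 1))) => chi [chi_x0 Lchi] x Kx.
rewrite -(subrK (chi (x0 xi)) (chi x)); apply: le_trans (ler_normD _ _) _.
rewrite addrC lerD //; apply: le_trans (Lchi _ _ Kx Kxi_x0) _.
apply: le_trans (frob_le_mx_norm _) _; rewrite ler_wpM2l //.
by apply: le_trans (ler_normB _ _) _; rewrite lerD // normK //; exact: Kxi_x0.
Qed.

End GradientImage.

Lemma lipschitz_open_preimage_trace {R : realType} (V : normedModType R)
    (K : set V) (f : V -> R) (k : R) (O : set R) :
  k.-lipschitz_K f -> open O -> exists2 W : set V, open W & K `&` f @^-1` O = K `&` W.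
Proof.
move=> Lf oO.
exists (\bigcup_(p in [set p : V * R | 0 < p.2 /\
   forall z, K z -> ball p.1 p.2 z -> O (f z)]) ball p.1 p.2).
  by apply: bigcup_open => p _; exact: ball_open.
apply/seteqP; split => z [Kz Oz]; split => //; last first.
  by case: Oz => -[x d] /= [_ xdO] xz; exact: xdO.
move: oO; rewrite openE => /(_ _ Oz) /nbhs_ballP [e e0 eO].
have k1_gt0 : 0 < `|k| + 1 by rewrite ltr_wpDl.
exists (z, e / (`|k| + 1)) => /=; last by apply: ballxx; rewrite divr_gt0.
split; first by rewrite divr_gt0.
move=> w Kw; rewrite -ball_normE /= => zw; apply: eO; rewrite -ball_normE /=.
apply: le_lt_trans (Lf (z, w) (conj Kz Kw)) _.
apply: le_lt_trans (ler_wpM2r (normr_ge0 _) (ler_norm k)) _.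
apply: le_lt_trans (ler_wpM2l (normr_ge0 _) (ltW zw)) _.
by rewrite mulrA ltr_pdivrMr // [X in X < _]mulrC ltr_pM2l // ltrDl.
Qed.

Section BorelMatrices.
Context {R : realType} {D : nat}.
Local Notation M := 'M[R]_(D, D).
Local Notation MT := (@MT R D).

Lemma MT_open_measurable (U : set M) : open U -> measurable (U : set MT).
Proof. by move=> oU; apply: sub_gen_smallest. Qed.

Lemma MT_closed_measurable (U : set M) : closed U -> measurable (U : set MT).
Proof.
move=> cU; rewrite -(setCK U); apply: measurableC.
by apply: MT_open_measurable; exact: closed_openC.
Qed.

Lemma lipschitz_measurable_fun (K : set M) (f : M -> R) (k : R) :
  measurable (K : set MT) -> k.-lipschitz_K f ->
  measurable_fun (K : set MT) (f : MT -> R).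
Proof.
move=> mK Lf; apply: (measurability _ (RGenOpens.measurableE R)).
move=> _ [_ [a [b ->]] <-].
have [W oW ->] := @lipschitz_open_preimage_trace _ _ _ _ _ _ Lf
  (@interval_open R (BRight a) (BLeft b) isT isT).
by apply: measurableI => //; exact: MT_open_measurable.
Qed.

End BorelMatrices.

Section Lip1Integration.
Context {R : realType} {D : nat}.
Local Notation M := 'M[R]_(D, D).
Local Notation MT := (@MT R D).
Variables (xi : M -> R) (sxi : smooth xi).

Lemma measurable_Kxi : measurable (Kxi xi : set MT).
Proof. exact: MT_closed_measurable (closed_Kxi xi sxi). Qed.

Lemma lip1_measurable_fun chi :
  lip1 xi chi -> measurable_fun (Kxi xi : set MT) (chi : MT -> R).
Proof. by move=> /lip1_lipschitz; exact: lipschitz_measurable_fun measurable_Kxi. Qed.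

Lemma lip1_integrable (mu : {finite_measure set MT -> \bar R}) chi :
  lip1 xi chi -> mu.-integrable (Kxi xi : set MT) (fun x => (chi x)%:E).
Proof.
move=> lchi; have [C HC] := lip1_bounded xi sxi.
apply: measurable_bounded_integrable.
- exact: measurable_Kxi.
- by rewrite ltey_eq fin_num_measure //; exact: measurable_Kxi.
- exact: lip1_measurable_fun.
- rewrite /bounded_near; near=> N => x Kx /=.
  apply: le_trans (HC _ lchi _ Kx) _; near: N; apply: nbhs_pinfty_ge; exact: num_real.
Unshelve. all: by end_near. Qed.

Lemma intKE (mu : {finite_measure set MT -> \bar R}) chi : lip1 xi chi ->
  (intK xi mu chi)%:E = (\int[mu]_(x in (Kxi xi : set MT)) (chi x)%:E)%E.
Proof.
move=> lchi; rewrite /intK fineK //.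
by apply: integrable_fin_num; [exact: measurable_Kxi | exact: lip1_integrable].
Qed.

Lemma Pup_measure_Kxi_compl (nu : probability MT R) :
  inPup xi nu -> nu (~` (Kxi xi : set MT)) = 0%E.
Proof.
move=> [q [q_ball [_ [_ law]]]].
rewrite law; last by apply: measurableC; exact: measurable_Kxi.
rewrite (_ : _ `&` _ = set0) ?measure0 //.
by apply/seteqP; split => // u [/= u01]; apply; exists (q u) => //; exact: q_ball.
Qed.

Lemma Pup_measure_Kxi (nu : probability MT R) :
  inPup xi nu -> nu (Kxi xi : set MT) = 1%E.
Proof.
move=> Pnu; rewrite -(probability_setT nu) -(setUv (Kxi xi : set MT)).
rewrite measureU0 //; first exact: measurable_Kxi.
  by apply: measurableC; exact: measurable_Kxi.
exact: Pup_measure_Kxi_compl.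
Qed.

End Lip1Integration.

Section BorelPup.
Context {R : realType} {D : nat}.
Local Notation M := 'M[R]_(D, D).
Local Notation MT := (@MT R D).
Local Notation prob := (probability MT R).
Variable xi : M -> R.

Lemma dirac_x0_Pup : inPup xi (\d_(x0 xi : MT) : prob).
Proof.
exists (fun=> 0); split; first by move=> u _; split; [exact: psd0 | rewrite frob0].
split; first by move=> u v _ _ _; rewrite /loewner_le subr0; exact: psd0.
split; first by move=> u _; exact: cvg_cst.
move=> A mA; rewrite /= diracE.
have [Ax|nAx] := pselect (A (x0 xi)).
  rewrite mem_set // (_ : _ `&` _ = `[0%R, 1%R[%classic); last first.
    by apply/seteqP; split => u /=; rewrite in_itv /=; [case | split].
  by rewrite lebesgue_measure_itv /= lte_fin ltr01 sube0.
by rewrite memNset // (_ : _ `&` _ = set0) ?measure0 //; apply/seteqP; split => // u [].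
Qed.

Lemma dopen_measurable (U : set (PT xi)) : dopen xi U -> measurable U.
Proof. by move=> oU; apply: sub_gen_smallest. Qed.

Lemma measurable_Pup : measurable (Pup xi).
Proof. by apply: dopen_measurable => nu _ _; exists 1. Qed.

Definition lsc_Pup (F : prob -> \bar R) :=
  forall nu, inPup xi nu -> forall r : R, (r%:E < F nu)%E ->
    exists2 d : R, 0 < d & forall nu', inPup xi nu' ->
      (Defs.dist xi nu nu' < d%:E)%E -> (r%:E < F nu')%E.

Lemma lsc_Pup_measurable_fun (F : prob -> \bar R) :
  lsc_Pup F -> measurable_fun [set: PT xi] (fun nu : PT xi => F nu).
Proof.
move=> lscF; apply: (measurability _ (ErealGenOInfty.measurableE R)).
move=> _ [_ [r ->] <-]; rewrite setTI; apply: dopen_measurable => nu /=.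
rewrite in_itv /= andbT => rF Pnu; have [d d0 Hd] := lscF nu Pnu r rF.
by exists d => // nu' Pnu' dnu; rewrite /= in_itv /= andbT; exact: Hd.
Qed.

Lemma cont_Pup_lsc (f : prob -> R) : cont_Pup xi f -> lsc_Pup (fun nu => (f nu)%:E).
Proof.
move=> cf nu Pnu r; rewrite lte_fin => rf.
have [d d0 Hd] : exists2 d : R, 0 < d & forall nu', inPup xi nu' ->
    (Defs.dist xi nu nu' < d%:E)%E -> `|f nu - f nu'| < f nu - r.
  by apply: cf; rewrite ?subr_gt0.
exists d => // nu' Pnu' dnu; have := Hd nu' Pnu' dnu.
by rewrite lte_fin ltr_norml => /andP[_]; lra.
Qed.

Lemma lsc_Pup_scale_intK (c : R) h : 0 < c -> lip1 xi h ->
  lsc_Pup (fun nu => (c * intK xi nu h)%:E).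
Proof.
move=> c0 lh nu Pnu r; rewrite lte_fin -ltr_pdivrMl // => rh.
exists (intK xi nu h - c^-1 * r); first by rewrite subr_gt0.
move=> nu' Pnu' dnu; rewrite lte_fin -ltr_pdivrMl //.
have : ((intK xi nu h - intK xi nu' h)%:E < (intK xi nu h - c^-1 * r)%:E)%E.
  by apply: le_lt_trans dnu; apply: ereal_sup_ubound; exists h.
by rewrite lte_fin; lra.
Qed.

Lemma lsc_Pup_sup (G : nat -> prob -> \bar R) (F : prob -> \bar R) :
  (forall n, lsc_Pup (G n)) ->
  (forall nu, inPup xi nu -> F nu = ereal_sup (range (G ^~ nu))) -> lsc_Pup F.
Proof.
move=> lscG FE nu Pnu r; rewrite FE // => /ereal_sup_gt [_ [n _ <-] rG].
have [d d0 Hd] := lscG n nu Pnu r rG; exists d => // nu' Pnu' dnu.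
rewrite FE //; apply: lt_le_trans (Hd _ Pnu' dnu) _.
by apply: ereal_sup_ubound; exists n.
Qed.

End BorelPup.

Section DistanceToComplement.
Context {R : realType} {V : normedModType R}.
Variable U : set V.

Definition dist_compl (x : V) : R := inf [set `|x - y| | y in ~` U].

Definition cutoff (n : nat) (x : V) : R := Num.min 1 (n.+1%:R * dist_compl x).

(* Otherwise [dist_compl] is the junk value [inf set0]. *)
Hypothesis U_compl_neq0 : ~` U !=set0.

Let dists_lbound x : has_lbound [set `|x - y| | y in ~` U].
Proof. by exists 0 => _ [y _ <-]. Qed.

Let dists_neq0 x : [set `|x - y| | y in ~` U] !=set0.
Proof. by case: U_compl_neq0 => y Uy; exists `|x - y|, y. Qed.

Lemma dist_compl_ge0 x : 0 <= dist_compl x.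
Proof. by apply: lb_le_inf => // _ [y _ <-]. Qed.

Lemma dist_compl_le x y : ~ U y -> dist_compl x <= `|x - y|.
Proof. by move=> Uy; apply: ge_inf => //; exists y. Qed.

Lemma dist_compl_out x : ~ U x -> dist_compl x = 0.
Proof.
move=> Ux; apply/le_anti; rewrite dist_compl_ge0 andbT.
by apply: le_trans (dist_compl_le _ _ Ux) _; rewrite subrr normr0.
Qed.

Lemma dist_compl_gt0 x : open U -> U x -> 0 < dist_compl x.
Proof.
rewrite openE => /(_ x) oU /oU /nbhs_ballP [r r0 rU].
apply: lt_le_trans r0 _; apply: lb_le_inf => // _ [y Uy <-].
by rewrite leNgt; apply/negP => xy; apply: Uy; apply: rU; rewrite -ball_normE.
Qed.

Lemma dist_compl_lip x y : `|dist_compl x - dist_compl y| <= `|x - y|.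
Proof.
have triangle a b : dist_compl a <= dist_compl b + `|a - b|.
  rewrite -lerBlDr; apply: lb_le_inf => // _ [w Uw <-].
  by rewrite lerBlDr addrC; apply: le_trans (dist_compl_le _ _ Uw) _; exact: ler_distD.
have := triangle x y; have := triangle y x; rewrite distrC ler_norml.
by move=> h1 h2; apply/andP; split; lra.
Qed.

Lemma cutoff_ge0 n x : 0 <= cutoff n x.
Proof. by rewrite le_min ler01 mulr_ge0 // dist_compl_ge0. Qed.

Lemma cutoff_le1 n x : cutoff n x <= 1.
Proof. by rewrite ge_min lexx. Qed.

Lemma cutoff_nondecreasing x : {homo cutoff ^~ x : n m / (n <= m)%N >-> n <= m}.
Proof.
move=> n m nm; rewrite /cutoff le_min ge_min lexx /= ge_min.
by rewrite ler_wpM2r ?dist_compl_ge0 ?ler_nat // orbT.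
Qed.

Lemma cutoff_lim x : open U -> limn (fun n => (cutoff n x)%:E) = (\1_U x)%:E.
Proof.
move=> oU; rewrite indicE; have [Ux|Ux] := pselect (U x); last first.
  rewrite memNset //.
  under eq_fun do rewrite /cutoff dist_compl_out // mulr0 (min_r ler01).
  exact: lim_cst.
rewrite mem_set //; apply: lim_near_cst => //.
have d0 := dist_compl_gt0 _ oU Ux.
exists (Num.Def.archi_bound (dist_compl x)^-1) => // n /= Nn.
congr (_%:E); apply/min_l; rewrite -ler_pdivrMr // div1r; apply/ltW.
apply: lt_le_trans (archi_boundP _) _; first by rewrite invr_ge0 ltW.
by rewrite ler_nat leqW.
Qed.

Lemma cutoff_lipschitz n (A : set V) : (n.+1%:R).-lipschitz_A (cutoff n).
Proof.
move=> [x y] _ /=; rewrite /cutoff.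
have min_lip (a b : R) : `|Num.min 1 a - Num.min 1 b| <= `|a - b|.
  have [ha|ha] := leP 1 a; have [hb|hb] := leP 1 b; rewrite ?subrr ?normr0 //.
  - by rewrite !ger0_norm; lra.
  - by rewrite !ler0_norm; lra.
apply: le_trans (min_lip _ _) _; rewrite -mulrBr normrM ger0_norm //.
by rewrite ler_wpM2l // dist_compl_lip.
Qed.

End DistanceToComplement.

Section MeasureEvaluation.
Context {R : realType} {D : nat}.
Local Notation M := 'M[R]_(D, D).
Local Notation MT := (@MT R D).
Local Notation prob := (probability MT R).
Variables (xi : M -> R) (sxi : smooth xi).
Local Notation K := (Kxi xi : set MT).

Lemma lip1_cutoff (U : set M) n : ~` U !=set0 ->
  lip1 xi (fun x => cutoff U n x / n.+1%:R).
Proof.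
move=> U_compl_neq0; have n1_gt0 : 0 < n.+1%:R :> R by rewrite ltr0n.
split.
  rewrite ger0_norm ?divr_ge0 ?cutoff_ge0 ?(ltW n1_gt0) // ler_pdivrMr // mul1r.
  by apply: le_trans (cutoff_le1 _ _ _) _; rewrite ler1n.
move=> x y _ _; rewrite -mulrBl normrM [`|_^-1|]ger0_norm ?invr_ge0 ?(ltW n1_gt0) //.
rewrite ler_pdivrMr // mulrC; apply: le_trans (_ : _ <= n.+1%:R * `|x - y|) _.
  exact: (cutoff_lipschitz U U_compl_neq0 n setT (x, y)).
by rewrite ler_wpM2l ?(ltW n1_gt0) // mx_norm_le_frob.
Qed.

Lemma integral_cutoffE (U : set M) n (mu : {finite_measure set MT -> \bar R}) :
  ~` U !=set0 -> (\int[mu]_(x in K) (cutoff U n x)%:E)%E =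
  (n.+1%:R * intK xi mu (fun x => cutoff U n x / n.+1%:R))%:E.
Proof.
move=> U_compl_neq0; have n1_gt0 : 0 < n.+1%:R :> R by rewrite ltr0n.
have mK := measurable_Kxi xi sxi.
rewrite EFinM intKE //; last exact: lip1_cutoff.
rewrite -ge0_integralZl //.
- by apply: eq_integral => x _; rewrite -EFinM mulrC divfK // gt_eqF.
- by apply/measurable_EFinP; apply: lip1_measurable_fun => //; exact: lip1_cutoff.
- by move=> x _; rewrite lee_fin divr_ge0 ?cutoff_ge0 ?ltW.
Qed.

Lemma Pup_measure_open_sup (U : set M) (nu : prob) : open U -> ~` U !=set0 ->
  inPup xi nu -> nu (U : set MT) =
  ereal_sup (range (fun n => \int[nu]_(x in K) (cutoff U n x)%:E))%E.
Proof.
move=> oU U_compl_neq0 Pnu.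
have mK := measurable_Kxi xi sxi.
have mU : measurable (U : set MT) := MT_open_measurable _ oU.
have mcutoff n : measurable_fun K (fun x => (cutoff U n x)%:E).
  apply/measurable_EFinP; apply: lipschitz_measurable_fun mK _.
  exact: cutoff_lipschitz.
have nuUK : nu (U `&` K) = nu U.
  rewrite -[in RHS](setIT (U : set MT)) -(setUv K) setIUr measureU0 //.
  - exact: measurableI.
  - by apply: measurableI => //; exact: measurableC.
  apply: subset_measure0 (Pup_measure_Kxi_compl xi sxi nu Pnu) => //.
  - by apply: measurableI => //; exact: measurableC.
  - exact: measurableC.
have cvg_to_nuU :
    (\int[nu]_(x in K) (cutoff U n x)%:E)%E @[n --> \oo] --> nu (U : set MT).
  rewrite -nuUK -integral_indic //.
  under [X in _ --> X]eq_integral do rewrite -(cutoff_lim _ U_compl_neq0) //.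
  apply: cvg_monotone_convergence => //.
  - by move=> n x _; rewrite lee_fin cutoff_ge0.
  - by move=> x _ n m nm; rewrite lee_fin cutoff_nondecreasing.
have nondecreasing_integrals :
    {homo (fun n => \int[nu]_(x in K) (cutoff U n x)%:E)%E :
      n m / (n <= m)%N >-> (n <= m)%E}.
  move=> n m nm; apply: ge0_le_integral => //.
  - by move=> x _; rewrite lee_fin cutoff_ge0.
  - by move=> x _; rewrite lee_fin cutoff_nondecreasing.
exact: (@cvg_unique _ (@ereal_hausdorff R) _ _ _ _ cvg_to_nuU
  (ereal_nondecreasing_cvgn nondecreasing_integrals)).
Qed.

Lemma measurable_fun_measure_open (U : set M) : open U ->
  measurable_fun [set: PT xi] (fun nu : PT xi => (nu : prob) (U : set MT)).
Proof.
move=> oU; have [U_compl_neq0|U_compl_eq0] := pselect (~` U !=set0); last first.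
  rewrite (_ : U = setT); last first.
    apply/seteqP; split => // x _; apply: contrapT => Ux.
    by apply: U_compl_eq0; exists x.
  under eq_fun do rewrite probability_setT; exact: measurable_cst.
apply: lsc_Pup_measurable_fun.
pose G n (nu : prob) := (n.+1%:R * intK xi nu (fun x => cutoff U n x / n.+1%:R))%:E.
apply: (@lsc_Pup_sup _ _ _ G) => [n | nu Pnu].
  by apply: lsc_Pup_scale_intK; [rewrite ltr0n | exact: lip1_cutoff].
rewrite Pup_measure_open_sup //.
suff -> : (fun n => \int[nu]_(x in K) (cutoff U n x)%:E)%E = G ^~ nu by [].
by apply/funext => n; exact: integral_cutoffE.
Qed.

Lemma measurable_fun_measure (A : set MT) : measurable A ->
  measurable_fun [set: PT xi] (fun nu : PT xi => (nu : prob) A).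
Proof.
move=> mA; apply: (@dynkin_induction _ MT open
  (fun A => measurable_fun [set: PT xi] (fun nu : PT xi => (nu : prob) A))) => //.
- exact: openI.
- by under eq_fun do rewrite probability_setT; exact: measurable_cst.
- exact: measurable_fun_measure_open.
- move=> S mS mfS; under eq_fun do rewrite probability_setC //.
  by apply: emeasurable_funB => //; exact: measurable_cst.
- move=> F mF tF mfF.
  rewrite (_ : (fun nu : PT xi => _) = (fun nu : PT xi =>
      \sum_(0 <= k <oo | k \in [set: nat]) (nu : prob) (F k))%E).
    by apply: ge0_emeasurable_sum => // k x _ _; exact: measure_ge0.
  by apply/funext => nu; rewrite measure_bigcup.
Qed.

Lemma measurable_fun_integral_measure (g : MT -> \bar R) :
  (forall x, (0 <= g x)%E) -> measurable_fun [set: MT] g ->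
  measurable_fun (Pup xi) (fun nu : PT xi => \int[(nu : prob)]_x g x)%E.
Proof.
move=> g0 mg; have := @measurable_fun_integral_kernel _ _ (PT xi) MT R
  (fun nu : PT xi => (nu : prob) : measure MT R) measurable_fun_measure g g0 mg.
by apply: measurable_funS => //; exact: measurable_Pup.
Qed.

End MeasureEvaluation.

Lemma le_integral_integrable {R : realType} d (T : measurableType d) (mu : measure T R)
    (A : set T) (f g : T -> \bar R) :
  measurable A -> measurable_fun A f -> mu.-integrable A g ->
  (forall x, A x -> (f x <= g x)%E) ->
  (\int[mu]_(x in A) f x <= \int[mu]_(x in A) g x)%E.
Proof.
move=> mA mf ig fg; have [mg _] := integrableP _ _ _ ig.
have fg' : {in A, forall x, (f x <= g x)%E} by move=> x; rewrite inE; exact: fg.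
rewrite [X in (X <= _)%E]integralE [X in (_ <= X)%E]integralE; apply: leeB.
  apply: ge0_le_integral => //; [exact: measurable_funepos | exact: measurable_funepos |].
  by move=> x Ax; apply: (funepos_le fg'); rewrite inE.
apply: ge0_le_integral => //; [exact: measurable_funeneg | exact: measurable_funeneg |].
by move=> x Ax; apply: (funeneg_le fg'); rewrite inE.
Qed.

Section Barycenter.
Context {R : realType} {D : nat}.
Local Notation M := 'M[R]_(D, D).
Local Notation MT := (@MT R D).
Local Notation prob := (probability MT R).
Local Open Scope ereal_scope.
Variables (xi : M -> R) (sxi : smooth xi) (eta : probability (PT xi) R) (beta : prob).
Hypothesis beta_Bar : is_Bar xi eta beta.

Let measurable_eval (A : set MT) : measurable A ->
  measurable_fun (Pup xi) (fun nu : PT xi => (nu : prob) A).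
Proof.
by move=> mA; apply: measurable_funS (measurable_fun_measure xi sxi A mA).
Qed.

Let Bar_indic (A : set MT) : measurable A -> \int[beta]_x (\1_A x)%:E =
  \int[eta]_(nu in Pup xi) \int[(nu : prob)]_x (\1_A x)%:E.
Proof.
move=> mA; rewrite integral_indic // setIT; apply: (eq_trans (beta_Bar A mA)).
by apply: eq_integral => nu _; rewrite integral_indic // setIT.
Qed.

Import HBNNSimple.

Let Bar_nnsfun (f : {nnsfun MT >-> R}) : \int[beta]_x (f x)%:E =
  \int[eta]_(nu in Pup xi) \int[(nu : prob)]_x (f x)%:E.
Proof.
have mP := measurable_Pup xi.
under [in LHS]eq_integral do rewrite fimfunE -fsumEFin //.
rewrite ge0_integral_fsum //; last 2 first.
  - by move=> r; exact/measurable_EFinP/measurableT_comp.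
  - by move=> r z _; rewrite EFinM nnfun_muleindic_ge0.
under [in RHS]eq_integral.
  move=> nu _.
  under eq_integral do rewrite fimfunE -fsumEFin //.
  rewrite /= ge0_integral_fsum //; last 2 first.
    - by move=> r; exact/measurable_EFinP/measurableT_comp.
    - by move=> r z _; rewrite EFinM nnfun_muleindic_ge0.
  under eq_fsbigr.
    move=> r _.
    rewrite (integralZl_indic _ (fun r => f @^-1` [set r])) //; last first.
      by move=> r0; rewrite preimage_nnfun0.
    rewrite integral_indic // setIT.
    over.
  over.
rewrite /= ge0_integral_fsum //; last 2 first.
  - by move=> r; apply: measurable_funeM; exact: measurable_eval.
  - move=> n nu _.
    by apply: (mulemu_ge0 (fun n => f @^-1` [set n])); exact: preimage_nnfun0.
apply: eq_fsbigr => r _.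
rewrite (integralZl_indic _ (fun r => f @^-1` [set r])) //; last exact: preimage_nnfun0.
rewrite /= Bar_indic //.
have [r0|r0] := leP 0%R r.
  rewrite ge0_integralZl //.
    by congr (_ * _); apply: eq_integral => nu _; rewrite integral_indic // setIT.
  by apply: measurable_eval; exact: measurable_funPTI.
rewrite integral0_eq ?mule0.
  by rewrite integral0_eq // => nu _; rewrite preimage_nnfun0 // measure0 mule0.
by move=> nu _; rewrite integral0_eq // => z _; rewrite preimage_nnfun0 // indic0.
Qed.

Lemma integral_Bar (g : MT -> \bar R) :
  (forall x, 0 <= g x) -> measurable_fun [set: MT] g ->
  \int[beta]_x g x = \int[eta]_(nu in Pup xi) \int[(nu : prob)]_x g x.
Proof.
move=> g0 mg; have mP := measurable_Pup xi.
pose g_ := nnsfun_approx measurableT mg.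
have g_nd x : {homo (fun n => (g_ n x)%:E) : n m / (n <= m)%N >-> n <= m}.
  by move=> n m nm; rewrite lee_fin; exact/lefP/nd_nnsfun_approx.
have g_lim (mu : prob) : \int[mu]_x g x = limn (fun n => \int[mu]_x (g_ n x)%:E).
  rewrite -monotone_convergence //.
  - by apply: eq_integral => z _; apply/esym/cvg_lim => //; exact: cvg_nnsfun_approx.
  - by move=> n; exact/measurable_EFinP.
  - by move=> n z _; rewrite lee_fin.
rewrite g_lim; under eq_fun do rewrite Bar_nnsfun.
rewrite -monotone_convergence //.
- by apply: eq_integral => nu _; rewrite g_lim.
- move=> n; apply: measurable_fun_integral_measure => //.
  + by move=> z; rewrite lee_fin.
  + exact/measurable_EFinP.
- by move=> n nu _; apply: integral_ge0 => z _; rewrite lee_fin.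
- move=> nu _ a b ab; apply: ge0_le_integral => //.
  + by move=> z _; rewrite lee_fin.
  + exact/measurable_EFinP.
  + exact/measurable_EFinP.
  + by move=> z _; exact: g_nd.
Qed.

Lemma Bar_measure_Pup : eta (Pup xi) = 1.
Proof.
have mP := measurable_Pup xi.
rewrite -(probability_setT beta) beta_Bar //.
rewrite (eq_integral (fun _ => 1%:E)); last by move=> nu _; rewrite probability_setT.
by rewrite integral_cst // mul1e.
Qed.

Lemma Bar_measure_Kxi : beta (Kxi xi : set MT) = 1.
Proof.
have mP := measurable_Pup xi.
rewrite beta_Bar; last exact: measurable_Kxi.
rewrite (eq_integral (fun _ => 1%:E)); last first.
  by move=> nu; rewrite inE => Pnu; exact: Pup_measure_Kxi.
by rewrite integral_cst // mul1e; exact: Bar_measure_Pup.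
Qed.

Lemma intK_Bar chi : lip1 xi chi ->
  eta.-integrable (Pup xi) (fun nu => (intK xi nu chi)%:E) /\
  (intK xi beta chi)%:E = \int[eta]_(nu in Pup xi) (intK xi nu chi)%:E.
Proof.
move=> lchi; have mP := measurable_Pup xi; have mK := measurable_Kxi xi sxi.
have [C HC] := lip1_bounded xi sxi.
(* Shifting by the uniform bound [C] makes the integrand nonnegative, as
   [integral_Bar] requires. *)
pose g := (fun x => (chi x + C)%:E) \_ (Kxi xi : set MT).
have g0 x : 0 <= g x.
  rewrite /g /patch; case: ifPn => [/set_mem Kx|_] //.
  by rewrite lee_fin; have := HC _ lchi x Kx; rewrite ler_norml => /andP[? _]; lra.
have mg : measurable_fun [set: MT] g.
  apply/(measurable_restrictT _ mK)/measurable_EFinP.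
  by apply: measurable_funD => //; exact: lip1_measurable_fun.
have integral_g (mu : prob) : mu (Kxi xi : set MT) = 1 ->
    \int[mu]_x g x = (intK xi mu chi + C)%:E.
  move=> muK; rewrite /g -integral_mkcond EFinD intKE //.
  have -> : C%:E = \int[mu]_(x in (Kxi xi : set MT)) C%:E.
    by rewrite integral_cst // -[LHS]mule1; congr (_ * _); exact/esym.
  rewrite -integralD //.
  - exact: lip1_integrable.
  - exact: finite_measure_integrable_cst.
have gE nu : Pup xi nu -> \int[(nu : prob)]_x g x = (intK xi nu chi + C)%:E.
  by move=> Pnu; apply: integral_g; exact: Pup_measure_Kxi.
have Bar_g := integral_Bar g g0 mg; rewrite integral_g ?Bar_measure_Kxi // in Bar_g.
have ig : eta.-integrable (Pup xi) (fun nu : PT xi => \int[(nu : prob)]_x g x).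
  apply/integrableP; split; first exact: measurable_fun_integral_measure.
  under eq_integral do rewrite gee0_abs ?integral_ge0 //.
  by rewrite -Bar_g ltry.
have iC : eta.-integrable (Pup xi) (fun _ => C%:E).
  exact: finite_measure_integrable_cst.
have intKE nu : Pup xi nu -> (intK xi nu chi)%:E = \int[(nu : prob)]_x g x - C%:E.
  by move=> Pnu; rewrite gE // EFinD addeK.
split.
  apply: eq_integrable (integrableB mP ig iC) => // nu; rewrite inE => Pnu.
  by rewrite intKE.
rewrite (eq_integral (fun nu : PT xi => \int[(nu : prob)]_x g x - C%:E)); last first.
  by move=> nu; rewrite inE => Pnu; exact: intKE.
rewrite integralB // -Bar_g integral_cst // (_ : _ * _ = C%:E) ?EFinD ?addeK //.
by rewrite -[RHS]mule1; congr (_ * _); exact: Bar_measure_Pup.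
Qed.

Lemma integral_le_intK_Bar (f : prob -> R) chi (l : R) :
  cont_Pup xi f -> lip1 xi chi ->
  (forall nu, inPup xi nu -> f nu <= intK xi nu chi - l)%R ->
  \int[eta]_(nu in Pup xi) (f nu)%:E <= (intK xi beta chi - l)%:E.
Proof.
move=> cf lchi f_le; have mP := measurable_Pup xi.
have [iK intK_BarE] := intK_Bar chi lchi.
have il : eta.-integrable (Pup xi) (fun _ => l%:E).
  exact: finite_measure_integrable_cst.
apply: (@le_trans _ _ (\int[eta]_(nu in Pup xi) ((intK xi nu chi)%:E - l%:E))).
  apply: le_integral_integrable.
  - exact: mP.
  - exact: measurable_funS (lsc_Pup_measurable_fun xi _ (cont_Pup_lsc xi f cf)).
  - exact: integrableB.
  - by move=> nu Pnu; rewrite -EFinB lee_fin; exact: f_le.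
rewrite integralB // -intK_BarE integral_cst // (_ : _ * _ = l%:E) //.
by rewrite -[RHS]mule1; congr (_ * _); exact: Bar_measure_Pup.
Qed.

End Barycenter.

Section Duality.
Context {R : realType} {D : nat}.
Local Notation M := 'M[R]_(D, D).
Local Notation MT := (@MT R D).
Local Notation prob := (probability MT R).
Local Open Scope ereal_scope.
Variables (xi : M -> R) (sxi : smooth xi) (phi : prob -> R) (phi_cont : cont_Pup xi phi).

Lemma inM1_intK (mu : {finite_measure set MT -> \bar R}) : inM1 xi (intK xi mu).
Proof.
move=> e e0; exists mu, mzero => chi _.
by rewrite /intK integral_measure_zero /= subr0 subrr normr0 ltW.
Qed.

Lemma dM_intK (nu : prob) : dM xi nu (intK xi nu) = 0.
Proof.
rewrite /dM (_ : [set _ | _ in _] = [set 0]) ?ereal_sup1 //.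
apply/seteqP; split => [_ [chi _ <-]|_ ->]; first by rewrite subrr.
exists (fun=> 0%R); last by rewrite subrr.
by split => [|x y _ _]; rewrite ?normr0 ?ler01 // subrr normr0 frob_ge0.
Qed.

Lemma barphi_intK_ge (nu : prob) :
  inPup xi nu -> (phi nu)%:E <= barphi xi phi (intK xi nu).
Proof.
move=> Pnu; have mP := measurable_Pup xi.
have mphi := lsc_Pup_measurable_fun xi _ (cont_Pup_lsc xi phi phi_cont).
apply: ereal_sup_ubound; exists (\d_(nu : PT xi)), nu; split.
- by rewrite /borel_prob_Pup /= diracE mem_set.
- move=> A mA; rewrite integral_dirac //; last first.
    by apply: measurable_funS (measurable_fun_measure xi sxi A mA).
  by rewrite /= diracE mem_set // [in RHS]mul1e.
- rewrite integral_dirac //; last exact: measurable_funS mphi.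
  by rewrite /= diracE mem_set // mul1e dM_intK sube0.
Qed.

Lemma barphi_star_le_phixi_star chi : barphi_star xi phi chi <= phixi_star xi phi chi.
Proof.
apply: le_ereal_inf_tmp => _ [nu Pnu <-].
apply: le_trans (ereal_inf_lbound _) _.
  by exists (intK xi nu); first exact: inM1_intK.
by rewrite EFinB leeB // barphi_intK_ge.
Qed.

Lemma barphi_le chi (l : R) (m : (M -> R) -> R) : lip1 xi chi ->
  (forall nu, inPup xi nu -> phi nu <= intK xi nu chi - l)%R ->
  barphi xi phi m <= (m chi - l)%:E.
Proof.
move=> lchi phi_le; apply: ge_ereal_sup => _ [eta [beta [_ beta_Bar ->]]].
have dM_ge : (intK xi beta chi - m chi)%:E <= dM xi beta m.
  by apply: ereal_sup_ubound; exists chi.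
have integral_phi_le :=
  integral_le_intK_Bar xi sxi eta beta beta_Bar phi chi l phi_cont lchi phi_le.
apply: le_trans (leeB integral_phi_le dM_ge) _.
by rewrite -EFinB lee_fin; lra.
Qed.

Lemma phixi_star_le_barphi_star chi : lip1 xi chi ->
  phixi_star xi phi chi <= barphi_star xi phi chi.
Proof.
move=> lchi; apply: le_ereal_inf_tmp => _ [m _ <-].
have phixi_le nu : inPup xi nu -> phixi_star xi phi chi <= (intK xi nu chi - phi nu)%:E.
  by move=> Pnu; apply: ereal_inf_lbound; exists nu.
case: (phixi_star xi phi chi) phixi_le => [l| |] phixi_le; last first.
- by rewrite leNye.
- by have := phixi_le _ (dirac_x0_Pup xi); rewrite leye_eq.
have phi_le nu : inPup xi nu -> (phi nu <= intK xi nu chi - l)%R.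
  by move=> Pnu; have := phixi_le _ Pnu; rewrite lee_fin; lra.
move: (barphi_le chi l m lchi phi_le); case: (barphi xi phi m) => [b| |] //.
- by rewrite !lee_fin => b_le; lra.
- by rewrite leey.
Qed.

End Duality.

Theorem proposition5p17 (R : realType) (D : nat) (xi : 'M[R]_(D, D) -> R)
    (phi : probability (@MT R D) R -> R) :
  (0 < D)%N ->
  smooth xi -> strictly_convex_on_psd xi ->
  cont_Pup xi phi ->
  forall chi0 : 'M[R]_(D, D) -> R, lip1 xi chi0 ->
    barphi_star xi phi chi0 = phixi_star xi phi chi0.
Proof.
move=> _ sxi _ phi_cont chi0 lchi0; apply/le_anti/andP; split.
- exact: barphi_star_le_phixi_star.
- exact: phixi_star_le_barphi_star.
Qed.
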